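(* Let $H\in(1/2,1)$, $T>0$, and let $S^H$ be a sub-fractional Brownian motion with index $H$. Then for every $\delta\in(0,T/2]$, $$\sup_{\delta\le s\le T-\delta}\sup_{0<h\le\delta}\Big|\frac{\sigma^2_{S^H}(s,s+h)}{h^{2H}}-1\Big|\ge H(2H-1)(2^{2H-1}-1)\,3^{2H-2}>0.$$
   Context: A sub-fractional Brownian motion with index $H\in(0,1)$ is a mean zero Gaussian process $(S^H_t)_{t\ge0}$ with covariance $G_H(s,t)=s^{2H}+t^{2H}-\tfrac12[(s+t)^{2H}+|s-t|^{2H}]$; its incremental variance is $\sigma^2_{S^H}(s,t)=\mathbb{E}|S^H_t-S^H_s|^2=|t-s|^{2H}+(s+t)^{2H}-2^{2H-1}(t^{2H}+s^{2H})$. *)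

From Stdlib Require Import Reals.
Open Scope R_scope.

(* x^a for real exponent a; only used with x > 0 here. *)
Definition rpow (x a : R) : R := Rpower x a.

Definition sfbm_incr_var (H s t : R) : R :=
  rpow (Rabs (t - s)) (2 * H) + rpow (s + t) (2 * H)
  - rpow 2 (2 * H - 1) * (rpow t (2 * H) + rpow s (2 * H)).

(* Write p = 2H, so 1 < p < 2.  The supremum in question is at least its
   value at the admissible point s = h = delta, where the scaling
   t |-> t^p gives
       sigma^2(delta, 2 delta) / delta^p - 1 = 3^p - 2^(p-1) (2^p + 1).
   With X = 2^(p-1) this quantity equals -X (f(2) + f(1) - 2 f(3/2)) for the
   convex function f(t) = t^p, and a second-difference estimate (f'' is at
   least p(p-1) 2^(p-2) on [1,2]) bounds f(2) + f(1) - 2 f(3/2) from below by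
   p(p-1) X / 8.  It remains to compare p(p-1) X^2 / 8 with the announced
   constant (p/2)(p-1)(X-1) 3^(p-2); this reduces to 4 (X-1) 3^(p-2) <= X^2,
   which follows from two instances of Bernoulli's inequality. *)

From Stdlib Require Import Reals Lra.
From Coquelicot Require Import Coquelicot.
Open Scope R_scope.

Lemma nondecreasing_of_derive_nonneg (f df : R -> R) (a b : R) :
  a <= b ->
  (forall x, a <= x <= b -> is_derive f x (df x)) ->
  (forall x, a <= x <= b -> 0 <= df x) ->
  f a <= f b.
Proof.
intros hab hd hpos.
destruct (MVT_gen f a b df) as [c [hc hmvt]];
  rewrite ?Rmin_left, ?Rmax_right in * by lra.
- intros x hx; apply hd; lra.
- intros x hx.
  apply (derivable_continuous_pt f x
           (exist _ (df x) (proj1 (is_derive_Reals _ _ _) (hd x hx)))).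
- assert (0 <= df c * (b - a)) by (apply Rmult_le_pos; [apply hpos|]; lra).
  lra.
Qed.

Lemma Rpower_pos (x e : R) : 0 < Rpower x e.
Proof. unfold Rpower; apply exp_pos. Qed.

Lemma Rpower_1_base (e : R) : Rpower 1 e = 1.
Proof. unfold Rpower; rewrite ln_1, Rmult_0_r; apply exp_0. Qed.

Lemma is_derive_Rpower (q x : R) :
  0 < x -> is_derive (fun t => Rpower t q) x (q * Rpower x (q - 1)).
Proof. intros hx; apply is_derive_Reals, derivable_pt_lim_power, hx. Qed.

Lemma Rpower_le_base_nonpos (x y q : R) :
  0 < x <= y -> q <= 0 -> Rpower y q <= Rpower x q.
Proof.
intros hxy hq.
rewrite <- (Ropp_involutive q), (Rpower_Ropp x), (Rpower_Ropp y).
assert (0 < Rpower x (- q)) by apply Rpower_pos.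
apply Rinv_le_contravar; [lra|].
apply Rle_Rpower_l; lra.
Qed.

Lemma is_derive_even_part (phi dphi : R -> R) (a x : R) :
  is_derive phi (a + x) (dphi (a + x)) -> is_derive phi (a - x) (dphi (a - x)) ->
  is_derive (fun y => phi (a + y) + phi (a - y)) x (dphi (a + x) - dphi (a - x)).
Proof.
intros hp hm.
apply (is_derive_plus (fun y => phi (a + y)) (fun y => phi (a - y))).
- rewrite <- (Rmult_1_l (dphi (a + x))).
  apply (is_derive_comp phi (fun y => a + y)); [exact hp|].
  auto_derive; [auto|ring].
- replace (- dphi (a - x)) with ((-1) * dphi (a - x)) by ring.
  apply (is_derive_comp phi (fun y => a - y)); [exact hm|].
  auto_derive; [auto|ring].
Qed.

Lemma is_derive_odd_part (phi dphi : R -> R) (a x : R) :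
  is_derive phi (a + x) (dphi (a + x)) -> is_derive phi (a - x) (dphi (a - x)) ->
  is_derive (fun y => phi (a + y) - phi (a - y)) x (dphi (a + x) + dphi (a - x)).
Proof.
intros hp hm.
replace (dphi (a + x) + dphi (a - x)) with (dphi (a + x) - (-1) * dphi (a - x))
  by ring.
apply (is_derive_minus (fun y => phi (a + y)) (fun y => phi (a - y))).
- rewrite <- (Rmult_1_l (dphi (a + x))).
  apply (is_derive_comp phi (fun y => a + y)); [exact hp|].
  auto_derive; [auto|ring].
- apply (is_derive_comp phi (fun y => a - y)); [exact hm|].
  auto_derive; [auto|ring].
Qed.

(* Second-difference estimate: if f'' >= m on [a - r, a + r], then
   f(a + r) + f(a - r) - 2 f(a) >= m r^2.  The even part of f minus m x^2
   has a derivative that vanishes at 0 and is itself nondecreasing. *)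
Lemma second_difference_lower_bound (f f1 f2 : R -> R) (a r m : R) :
  0 <= r ->
  (forall x, a - r <= x <= a + r -> is_derive f x (f1 x)) ->
  (forall x, a - r <= x <= a + r -> is_derive f1 x (f2 x)) ->
  (forall x, a - r <= x <= a + r -> m <= f2 x) ->
  m * r ^ 2 <= f (a + r) + f (a - r) - 2 * f a.
Proof.
intros hr hf hf1 hf2.
set (g1 := fun x => f1 (a + x) - f1 (a - x) - 2 * m * x).
assert (g1_nonneg : forall x, 0 <= x <= r -> 0 <= g1 x).
{ intros x hx.
  replace 0 with (g1 0) at 1 by (unfold g1; rewrite Rplus_0_r, Rminus_0_r; ring).
  apply (nondecreasing_of_derive_nonneg g1
           (fun y => f2 (a + y) + f2 (a - y) - 2 * m * 1)); [lra| |].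
  - intros y hy; apply (is_derive_minus (fun y => f1 (a + y) - f1 (a - y))).
    + apply is_derive_odd_part; apply hf1; lra.
    + auto_derive; [auto|ring].
  - intros y hy.
    assert (m <= f2 (a + y)) by (apply hf2; lra).
    assert (m <= f2 (a - y)) by (apply hf2; lra).
    lra. }
set (g := fun x => f (a + x) + f (a - x) - 2 * f a - m * x ^ 2).
assert (g 0 <= g r).
{ apply (nondecreasing_of_derive_nonneg g g1 0 r hr).
  - intros y hy; apply (is_derive_minus (fun y => f (a + y) + f (a - y) - 2 * f a)).
    + replace (f1 (a + y) - f1 (a - y)) with (f1 (a + y) - f1 (a - y) - 0) by ring.
      apply (is_derive_minus (fun y => f (a + y) + f (a - y))).
      * apply is_derive_even_part; apply hf; lra.
      * apply (is_derive_const (K:=R_AbsRing) (V:=R_NormedModule)).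
    + auto_derive; [auto|ring].
  - exact g1_nonneg. }
unfold g in *; rewrite Rplus_0_r, Rminus_0_r in *; lra.
Qed.

Lemma Rpower_bernoulli (x e : R) :
  1 <= x -> 0 <= e <= 1 -> Rpower x e <= 1 + e * (x - 1).
Proof.
intros hx he.
set (g := fun y => 1 + e * (y - 1) - Rpower y e).
assert (g 1 <= g x).
{ apply (nondecreasing_of_derive_nonneg g (fun y => e * 1 - e * Rpower y (e - 1)));
    [lra| |].
  - intros y hy; apply (is_derive_minus (fun y => 1 + e * (y - 1))).
    + auto_derive; [auto|ring].
    + apply is_derive_Rpower; lra.
  - intros y hy.
    assert (Rpower y (e - 1) <= Rpower 1 (e - 1))
      by (apply Rpower_le_base_nonpos; lra).
    rewrite Rpower_1_base in *.
    assert (e * Rpower y (e - 1) <= e * 1) by (apply Rmult_le_compat_l; lra).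
    lra. }
unfold g in *; rewrite Rpower_1_base in *; lra.
Qed.

Lemma Rpower_second_difference (p : R) :
  1 < p < 2 ->
  p * (p - 1) * Rpower 2 (p - 2) / 4 <= Rpower 2 p + 1 - 2 * Rpower (3/2) p.
Proof.
intros hp.
assert (hsd := second_difference_lower_bound (fun t => Rpower t p)
  (fun t => p * Rpower t (p - 1)) (fun t => p * ((p - 1) * Rpower t (p - 1 - 1)))
  (3/2) (1/2) (p * (p - 1) * Rpower 2 (p - 2))).
replace (3/2 + 1/2) with 2 in hsd by field.
replace (3/2 - 1/2) with 1 in hsd by field.
rewrite Rpower_1_base in hsd.
enough (p * (p - 1) * Rpower 2 (p - 2) * (1/2) ^ 2 <= Rpower 2 p + 1 - 2 * Rpower (3/2) p)
  by lra.
apply hsd; [lra| | |].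
- intros x hx; apply is_derive_Rpower; lra.
- intros x hx; apply is_derive_scal, is_derive_Rpower; lra.
- intros x hx.
  assert (Rpower 2 (p - 2) <= Rpower x (p - 1 - 1))
    by (replace (p - 1 - 1) with (p - 2) by ring; apply Rpower_le_base_nonpos; lra).
  assert (0 < p * (p - 1)) by nra.
  replace (p * ((p - 1) * Rpower x (p - 1 - 1)))
    with (p * (p - 1) * Rpower x (p - 1 - 1)) by ring.
  apply Rmult_le_compat_l; lra.
Qed.

(* With X = 2^(p-1): 4 (X - 1) 3^(p-2) <= X^2 for 1 <= p <= 2.  Since
   4 * 3^(p-2) = X^2 (4/3)^(2-p), this is (X - 1)(4/3)^(2-p) <= 1, which
   follows from Bernoulli's inequality applied to both powers. *)
Lemma power_gap_bound (p : R) :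
  1 <= p <= 2 ->
  4 * (Rpower 2 (p - 1) - 1) * Rpower 3 (p - 2) <= Rpower 2 (p - 1) * Rpower 2 (p - 1).
Proof.
intros hp.
set (X := Rpower 2 (p - 1)); set (Z := Rpower (4/3) (2 - p)).
assert (hscale : 4 * Rpower 3 (p - 2) = X * X * Z).
{ assert (ln4 : ln 4 = 2 * ln 2)
    by (replace 4 with (2 * 2) by lra; rewrite ln_mult by lra; ring).
  assert (ln43 : ln (4/3) = 2 * ln 2 - ln 3)
    by (unfold Rdiv; rewrite ln_mult, ln_Rinv, ln4 by lra; ring).
  replace 4 with (exp (2 * ln 2)) at 1
    by (rewrite <- ln4; apply exp_ln; lra).
  unfold X, Z, Rpower; rewrite <- !exp_plus, ln43; f_equal; ring. }
assert (hX : X <= 1 + (p - 1) * (2 - 1)) by (apply Rpower_bernoulli; lra).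
assert (hZ : Z <= 1 + (2 - p) * (4/3 - 1)) by (apply Rpower_bernoulli; lra).
assert (hX1 : 1 <= X)
  by (unfold X; replace 1 with (Rpower 2 0) at 1 by (apply Rpower_O; lra);
      apply Rle_Rpower; lra).
assert (hZ0 : 0 < Z) by apply Rpower_pos.
assert (hprod : (X - 1) * Z <= 1).
{ apply Rle_trans with ((p - 1) * (1 + (2 - p) * (4/3 - 1))); [|nra].
  apply Rmult_le_compat; lra. }
replace (4 * (X - 1) * Rpower 3 (p - 2)) with ((X - 1) * (4 * Rpower 3 (p - 2)))
  by ring.
rewrite hscale.
replace ((X - 1) * (X * X * Z)) with (((X - 1) * Z) * (X * X)) by ring.
assert (0 <= X * X) by nra.
nra.
Qed.

(* The key numerical inequality, for 1 < p < 2: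
   (p/2)(p-1)(2^(p-1) - 1) 3^(p-2) <= 2^(p-1)(2^p + 1) - 3^p.
   With X = 2^(p-1) and 3^p = 2X (3/2)^p, the right side is
   X (2^p + 1 - 2 (3/2)^p) >= p(p-1) X^2 / 8 by strong convexity, and the
   left side is at most the same by power_gap_bound. *)
Lemma sfbm_diagonal_gap (p : R) :
  1 < p < 2 ->
  p / 2 * (p - 1) * (Rpower 2 (p - 1) - 1) * Rpower 3 (p - 2)
  <= Rpower 2 (p - 1) * (Rpower 2 p + 1) - Rpower 3 p.
Proof.
intros hp.
set (X := Rpower 2 (p - 1)); set (Q := Rpower (3/2) p).
assert (h2p : Rpower 2 p = 2 * X).
{ unfold X; replace p with ((p - 1) + 1) at 1 by ring.
  rewrite Rpower_plus, Rpower_1 by lra; ring. }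
assert (h2p2 : Rpower 2 (p - 2) = X / 2).
{ unfold X; replace (p - 1) with ((p - 2) + 1) by ring.
  rewrite Rpower_plus, Rpower_1 by lra; field. }
assert (h3p : Rpower 3 p = 2 * X * Q).
{ unfold Q; rewrite <- h2p, Rpower_mult_distr by lra; f_equal; field. }
assert (hconv := Rpower_second_difference p hp).
rewrite h2p2, h2p in hconv; fold Q in hconv.
assert (hgap := power_gap_bound p ltac:(lra)); fold X in hgap.
assert (hX0 : 0 < X) by apply Rpower_pos.
assert (hpp : 0 < p * (p - 1)) by nra.
rewrite h2p, h3p.
apply Rle_trans with (p * (p - 1) * (X * X) / 8).
- assert (p / 2 * (p - 1) * (4 * (X - 1) * Rpower 3 (p - 2)) <= p / 2 * (p - 1) * (X * X))
    by (apply Rmult_le_compat_l; nra).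
  lra.
- assert (X * (p * (p - 1) * (X / 2) / 4) <= X * (2 * X + 1 - 2 * Q))
    by (apply Rmult_le_compat_l; lra).
  lra.
Qed.

Lemma sfbm_incr_var_diagonal (H d : R) :
  0 < d ->
  sfbm_incr_var H d (d + d)
  = rpow d (2 * H) * (1 + rpow 3 (2 * H) - rpow 2 (2 * H - 1) * (rpow 2 (2 * H) + 1)).
Proof.
intros hd; unfold sfbm_incr_var, rpow.
replace (Rabs (d + d - d)) with d by (rewrite Rabs_right; lra).
replace (d + (d + d)) with (3 * d) by ring.
replace (d + d) with (2 * d) by ring.
rewrite <- !(Rpower_mult_distr _ d) by lra.
ring.
Qed.

Theorem mainTheorem11 (H T : R) (hH : 1/2 < H < 1) (hT : 0 < T) :
  forall delta : R, 0 < delta <= T / 2 ->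
    (forall M : R,
       (forall s h : R, delta <= s <= T - delta -> 0 < h <= delta ->
          Rabs (sfbm_incr_var H s (s + h) / rpow h (2 * H) - 1) <= M) ->
       H * (2 * H - 1) * (rpow 2 (2 * H - 1) - 1) * rpow 3 (2 * H - 2) <= M)
    /\ 0 < H * (2 * H - 1) * (rpow 2 (2 * H - 1) - 1) * rpow 3 (2 * H - 2).
Proof.
intros delta hdelta.
assert (hconst : H * (2 * H - 1) * (rpow 2 (2 * H - 1) - 1) * rpow 3 (2 * H - 2)
  = 2 * H / 2 * (2 * H - 1) * (Rpower 2 (2 * H - 1) - 1) * Rpower 3 (2 * H - 2))
  by (unfold rpow; field).
rewrite hconst; split.
- (* The supremum dominates the value at the admissible point s = h = delta. *)
  intros M hM.
  specialize (hM delta delta ltac:(lra) ltac:(lra)).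
  rewrite sfbm_incr_var_diagonal in hM by lra.
  assert (hd0 : 0 < rpow delta (2 * H)) by apply Rpower_pos.
  replace (rpow delta (2 * H) * (1 + rpow 3 (2 * H)
             - rpow 2 (2 * H - 1) * (rpow 2 (2 * H) + 1)) / rpow delta (2 * H) - 1)
    with (- (Rpower 2 (2 * H - 1) * (Rpower 2 (2 * H) + 1) - Rpower 3 (2 * H))) in hM
    by (unfold rpow in *; field; lra).
  rewrite Rabs_Ropp in hM.
  apply Rle_trans with (2 := Rle_trans _ _ _ (Rle_abs _) hM).
  apply sfbm_diagonal_gap; lra.
-
  assert (1 < Rpower 2 (2 * H - 1))
    by (rewrite <- (Rpower_O 2) at 1 by lra; apply Rpower_lt; lra).
  assert (0 < Rpower 3 (2 * H - 2)) by apply Rpower_pos.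
  apply Rmult_lt_0_compat; [|lra].
  apply Rmult_lt_0_compat; [|lra].
  apply Rmult_lt_0_compat; lra.
Qed.
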